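(* Assume the standing hypotheses below, with $\mathcal{B}$ as defined there. Then for every $A \in \mathcal{B}$, every pure subgroup of finite rank of the quotient group $G/A$ is free.
   Context: Standing hypotheses: $G$ is a torsion-free abelian group and $0 = G_0 < G_1 < \dots < G_n < \dots$ ($n<\omega$) is an ascending chain of subgroups of $G$ such that every $G_n$ is free, every $G_n$ is a pure subgroup of $G$, and $G = \bigcup_{n<\omega} G_n$. For each $n<\omega$, $X_n$ is a fixed basis of $G_n$, $\mathcal{B}_n$ is the family of all subgroups of $G_n$ generated by subsets of $X_n$, $\mathcal{B}'_n = \{ A \in \mathcal{B}_n : A + G_i \text{ is pure in } G \text{ for every } i<\omega\}$, and $\mathcal{B} = \{ A \le G : A \cap G_n \in \mathcal{B}'_n \text{ for every } n<\omega\}$. A subgroup $H$ of an abelian group $G$ is pure if solubility in $G$ of every equation $nx = h$ with $n\in\mathbb{Z}$, $h\in H$ implies its solubility in $H$. The rank of an abelian group is the cardinality of a maximal independent subset. *)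

(* Abelian groups are zmodTypes; subgroups are Prop-valued
   predicates (membership need not be decidable). *)
From HB Require Import structures.
From mathcomp Require Import all_boot all_order all_algebra.
Set Implicit Arguments. Unset Strict Implicit. Unset Printing Implicit Defensive.
Import Order.TTheory GRing.Theory Num.Theory.
Local Open Scope ring_scope.

Section AbGroups.
Variable G : zmodType.

Definition set_eq (P Q : G -> Prop) : Prop := forall x, P x <-> Q x.
Definition sub_set (P Q : G -> Prop) : Prop := forall x, P x -> Q x.

Definition torsion_free : Prop :=
  forall (n : nat) (x : G), (0 < n)%N -> x *+ n = 0 -> x = 0.

Definition is_subgroup (H : G -> Prop) : Prop :=
  H 0 /\ forall x y, H x -> H y -> H (x - y).

Definition span (X : G -> Prop) (g : G) : Prop :=
  exists (s : seq G) (c : G -> int),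
    {in s, forall x, X x} /\ g = \sum_(x <- s) x *~ c x.

Definition independent (X : G -> Prop) : Prop :=
  forall (s : seq G) (c : G -> int),
    uniq s -> {in s, forall x, X x} ->
    \sum_(x <- s) x *~ c x = 0 -> {in s, forall x, c x = 0%R}.

Definition is_basis (H X : G -> Prop) : Prop :=
  sub_set X H /\ independent X /\ set_eq H (span X).

Definition is_free (H : G -> Prop) : Prop := exists X, is_basis H X.

Definition is_pure (H : G -> Prop) : Prop :=
  forall (n : int) (h : G), H h -> (exists x : G, x *~ n = h) ->
    exists y : G, H y /\ y *~ n = h.

Definition finite_rank (H : G -> Prop) : Prop :=
  exists s : seq G,
    {in s, forall x, H x} /\ independent (fun x => x \in s) /\
    forall Y : G -> Prop, sub_set Y H -> independent Y ->
      (forall x, x \in s -> Y x) -> forall y, Y y -> y \in s.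

Definition sum_sub (A B : G -> Prop) (g : G) : Prop :=
  exists a b, A a /\ B b /\ g = a + b.

Definition cap (A B : G -> Prop) (g : G) : Prop := A g /\ B g.

Definition in_Bn (Xn A : G -> Prop) : Prop :=
  exists Y, sub_set Y Xn /\ set_eq A (span Y).

Definition in_Bn' (Gs : nat -> G -> Prop) (Xn A : G -> Prop) : Prop :=
  in_Bn Xn A /\ forall i : nat, is_pure (sum_sub A (Gs i)).

Definition in_B (Gs Xs : nat -> G -> Prop) (A : G -> Prop) : Prop :=
  is_subgroup A /\ forall n : nat, in_Bn' Gs (Xs n) (cap A (Gs n)).

End AbGroups.

(* - Generic facts on subgroups and spans come first; the key ones are that
     the span of a part of an independent set is pure in its span
     (span_part_pure) and that an element with no nonzero multiple in span X
     can be adjoined to an independent set X (independent_add).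
   - Subgroups of the span of a finite independent list x :: e are free
     (free_of_spanl), by induction: the x-coefficients of H form a subgroup of
     Z, generated by some d, and an element of H with x-coefficient d extends
     a basis of H /\ span e to a basis of H.
   - Quotient step: the span of a maximal independent list s of H contains a
     nonzero multiple of each h in H.  Lifts of s lie in the span of a
     finite list t of vectors of one basis X_n.  With Y <= X_n the basis of
     A /\ G_n, the list e = pi (t \ Y) is independent (image_indepl), and if
     h*k = pi g' with g' in span t, then purity of (A /\ G_m) + G_n and
     torsion-freeness give a lift b in G_n of h with b*k in span (t \/ Y);
     hence b lies in span (t \/ Y) and h in span e (multiple_in_image). *)

From Pilot Require Import Defs.
From HB Require Import structures.
From mathcomp Require Import all_boot all_order all_algebra.
Import Order.TTheory GRing.Theory Num.Theory.
Local Open Scope ring_scope.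
From Stdlib Require Import ClassicalEpsilon.

Set Implicit Arguments. Unset Strict Implicit.

(* Boolean reflection of an arbitrary proposition, used to filter lists by
   Prop-valued predicates. *)
Definition decb (P : Prop) : bool :=
  if excluded_middle_informative P then true else false.

Lemma decbP (P : Prop) : reflect P (decb P).
Proof. by rewrite /decb; case: excluded_middle_informative => h; constructor. Qed.

Lemma torsion_free_mulz (G : zmodType) : torsion_free G ->
  forall (z : G) (k : int), k != 0 -> z *~ k = 0 -> z = 0.
Proof.
move=> htf z [n|n] k0 zk.
  by apply: (htf n); [rewrite lt0n; apply: contraNneq k0 => -> | rewrite pmulrn].
by apply: (htf n.+1) => //; apply/eqP; rewrite -oppr_eq0 pmulrn -mulrNz -NegzE zk.
Qed.

Section Subgroups.
Variable V : zmodType.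
Implicit Types (H K : V -> Prop) (x y : V).

Lemma subgroup0 H : is_subgroup H -> H 0.
Proof. by case. Qed.

Lemma subgroupB H x y : is_subgroup H -> H x -> H y -> H (x - y).
Proof. by move=> sH; apply: sH.2. Qed.

Lemma subgroupN H x : is_subgroup H -> H x -> H (- x).
Proof. by move=> sH Hx; rewrite -sub0r; apply: subgroupB => //; apply: subgroup0. Qed.

Lemma subgroupD H x y : is_subgroup H -> H x -> H y -> H (x + y).
Proof. by move=> sH Hx Hy; rewrite -[y]opprK; apply: subgroupB => //; apply: subgroupN. Qed.

Lemma subgroupMz H x k : is_subgroup H -> H x -> H (x *~ k).
Proof.
move=> sH Hx; have Hn n : H (x *+ n).
  by elim: n => [|n IH]; rewrite ?mulr0n ?mulrS; [apply: subgroup0 | apply: subgroupD].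
by case: k => n; rewrite ?NegzE ?mulrNz -pmulrn //; apply: subgroupN.
Qed.

Lemma cap_subgroup H K : is_subgroup H -> is_subgroup K -> is_subgroup (cap H K).
Proof.
move=> sH sK; split; first by split; apply: subgroup0.
by move=> x y [Hx Kx] [Hy Ky]; split; apply: subgroupB.
Qed.

End Subgroups.

Section Spans.
Variable V : zmodType.
Implicit Types (X Y Z H : V -> Prop) (s t u : seq V) (g : V).

Lemma span_in X g : X g -> Defs.span X g.
Proof.
move=> Xg; exists [:: g], (fun _ => 1); split; last by rewrite big_seq1 mulr1z.
by move=> y; rewrite inE => /eqP ->.
Qed.

Lemma span_mono X Y g : sub_set X Y -> Defs.span X g -> Defs.span Y g.
Proof. by move=> XY [s [c [sX ->]]]; exists s, c; split => // x /sX /XY. Qed.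

Lemma span_uniq X g : Defs.span X g ->
  exists s c, [/\ uniq s, {in s, forall x, X x} & g = \sum_(x <- s) x *~ c x].
Proof.
move=> [s [c [sX ->]]]; elim: s sX => [|a s IH] sX; first by exists [::], c.
have [s' [c' [us' s'X sE]]] := IH (fun x xs => sX x (@mem_behead _ (a :: s) x xs)).
rewrite big_cons sE.
have Xa : X a by apply: sX; rewrite inE eqxx.
case: (boolP (a \in s')) => as'.
  exists s', (fun y => if y == a then c a + c' a else c' y); split => //.
  rewrite !(bigD1_seq a) //= eqxx mulrzDr addrA.
  by congr (_ + _); apply: eq_bigr => x /negbTE ->.
exists (a :: s'), (fun y => if y == a then c a else c' y); split.
- by rewrite /= as'.
- by move=> x; rewrite inE => /orP [/eqP -> | /s'X].
rewrite big_cons eqxx; congr (_ + _); apply: eq_big_seq => x xs.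
by rewrite ifN //; apply: contraNneq as' => <-.
Qed.

Lemma sum_restrict (T : eqType) (s w : seq T) (F : T -> V) :
  uniq s -> uniq w -> {subset s <= w} ->
  \sum_(x <- w) (if x \in s then F x else 0) = \sum_(x <- s) F x.
Proof.
move=> us uw sw; rewrite -big_mkcond -big_filter; apply: perm_big.
apply: uniq_perm => [|//|x]; first exact: filter_uniq.
by rewrite mem_filter; case xs: (x \in s); rewrite //= sw.
Qed.

Lemma sum_merge s u (a b : V -> int) : uniq s -> uniq u ->
  \sum_(x <- undup (s ++ u))
     x *~ ((if x \in s then a x else 0) + (if x \in u then b x else 0))
  = \sum_(x <- s) x *~ a x + \sum_(x <- u) x *~ b x.
Proof.
move=> us uu; rewrite -!(sum_restrict _ us (undup_uniq (s ++ u))) -?big_split;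
  last by move=> x xs; rewrite mem_undup mem_cat xs.
rewrite -!(sum_restrict _ uu (undup_uniq (s ++ u))) -?big_split;
  last by move=> x xs; rewrite mem_undup mem_cat xs orbT.
by apply: eq_bigr => x _; rewrite mulrzDr; case: (x \in s); case: (x \in u).
Qed.

Lemma span_is_subgroup X : is_subgroup (Defs.span X).
Proof.
split; first by exists [::], (fun _ => 0); rewrite big_nil.
move=> _ _ /span_uniq [s [a [us sX ->]]] /span_uniq [u [b [uu uX ->]]].
exists (undup (s ++ u)),
  (fun x => (if x \in s then a x else 0) + (if x \in u then - b x else 0)).
split; first by move=> x; rewrite mem_undup mem_cat => /orP [/sX | /uX].
rewrite sum_merge // -sumrN; congr (_ + _); apply: eq_bigr => x _.
by rewrite mulrNz.
Qed.

Lemma span_least X H g : is_subgroup H -> sub_set X H -> Defs.span X g -> H g.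
Proof.
move=> sH XH [s [c [sX ->]]]; elim: s sX => [|a s IH] sX.
  by rewrite big_nil; apply: subgroup0.
rewrite big_cons; apply: subgroupD => //.
  by apply: subgroupMz => //; apply/XH/sX; rewrite inE eqxx.
exact: IH (fun x xs => sX x (@mem_behead _ (a :: s) x xs)).
Qed.

Lemma span_union X Y g : Defs.span (fun x => X x \/ Y x) g ->
  exists g1 g2, [/\ Defs.span X g1, Defs.span Y g2 & g = g1 + g2].
Proof.
move=> [s [c [sXY ->]]].
exists (\sum_(x <- s | decb (X x)) x *~ c x), (\sum_(x <- s | ~~ decb (X x)) x *~ c x).
split; last exact: bigID.
- exists [seq x <- s | decb (X x)], c; split; last by rewrite big_filter.
  by move=> x; rewrite mem_filter => /andP [/decbP].
- exists [seq x <- s | ~~ decb (X x)], c; split; last by rewrite big_filter.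
  by move=> x; rewrite mem_filter => /andP [/decbP nXx /sXY []].
Qed.

Lemma span_finite_support X (l : seq V) : (forall g, g \in l -> Defs.span X g) ->
  exists t, [/\ uniq t, {in t, forall x, X x} &
                forall g, g \in l -> Defs.span (fun x => x \in t) g].
Proof.
elim: l => [|a l IH] lX; first by exists [::].
have [t [ut tX lt]] := IH (fun g gl => lX g (@mem_behead _ (a :: l) g gl)).
have [u [c [_ uX aE]]] := span_uniq (lX a (mem_head a l)).
exists (undup (u ++ t)); split; first exact: undup_uniq.
  by move=> x; rewrite mem_undup mem_cat => /orP [/uX | /tX].
move=> g; rewrite inE => /orP [/eqP -> | gl].
  by exists u, c; split => // x xu; rewrite mem_undup mem_cat xu.
by apply: span_mono (lt g gl) => x xt; rewrite mem_undup mem_cat xt orbT.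
Qed.

Lemma indep_coef X Z s u (a b : V -> int) :
  independent X -> sub_set Z X ->
  uniq s -> {in s, forall x, X x} -> uniq u -> {in u, forall x, Z x} ->
  \sum_(x <- s) x *~ a x = \sum_(x <- u) x *~ b x ->
  forall x, x \in s -> ~ Z x -> a x = 0.
Proof.
move=> iX ZX us sX uu uZ eq_ab x xs nZx.
pose c x := (if x \in s then a x else 0) + (if x \in u then - b x else 0).
have c0 : \sum_(y <- undup (s ++ u)) y *~ c y = 0.
  rewrite sum_merge // eq_ab -big_split big1 // => y _.
  by rewrite /= mulrNz subrr.
have undupX : {in undup (s ++ u), forall y, X y}.
  by move=> y; rewrite mem_undup mem_cat => /orP [/sX | /uZ /ZX].
have := iX _ c (undup_uniq _) undupX c0 x.
rewrite mem_undup mem_cat xs /c xs => /(_ isT).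
by rewrite ifN ?addr0 //; apply/negP => /uZ.
Qed.

Lemma span_part_pure X Z g k : independent X -> sub_set Z X ->
  Defs.span X g -> k != 0 -> Defs.span Z (g *~ k) -> Defs.span Z g.
Proof.
move=> iX ZX /span_uniq [s [c [us sX gE]]] k0 /span_uniq [u [b [uu uZ gkE]]].
have cZ x : x \in s -> ~ Z x -> c x = 0.
  move=> xs nZx; have /eqP : c x * k = 0.
    apply: (indep_coef (a := fun x => c x * k) (b := b) iX ZX us sX uu uZ) => //.
    by rewrite -gkE gE mulrz_suml; apply: eq_bigr => y _; rewrite mulrzA.
  by rewrite mulf_eq0 (negbTE k0) orbF => /eqP.
exists [seq x <- s | decb (Z x)], c; split.
  by move=> x; rewrite mem_filter => /andP [/decbP].
rewrite big_filter big_mkcond gE; apply: eq_big_seq => x xs /=.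
by case: decbP => // nZx; rewrite cZ ?mulr0z.
Qed.

Lemma independent_add X h : independent X ->
  (forall k, Defs.span X (h *~ k) -> k = 0) ->
  independent (fun x => X x \/ x = h).
Proof.
move=> iX hX s c us sXh s0.
have sX' : {in [seq y <- s | y != h], forall y, X y}.
  by move=> y; rewrite mem_filter => /andP [yh /sXh [//|/eqP]]; rewrite (negbTE yh).
have [ch0 r0] : (h \in s -> c h = 0) /\ \sum_(y <- s | y != h) y *~ c y = 0.
  case: (boolP (h \in s)) => hs; last first.
    have sh : [seq y <- s | y != h] = s.
      by apply/all_filterP/allP => y ys; apply: contraNneq hs => <-.
    by split; last by rewrite -big_filter sh.
  move: s0; rewrite (bigD1_seq h) //= => s0.
  have ch0 : c h = 0.
    apply: oppr_inj; rewrite oppr0; apply: hX; rewrite mulrNz.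
    move/eqP: s0; rewrite addrC addr_eq0 => /eqP <-.
    by exists [seq y <- s | y != h], c; split => //; rewrite big_filter.
  by move: s0; rewrite ch0 mulr0z add0r.
move=> y ys; have [yh|yh] := eqVneq y h; first by rewrite yh ch0 // -yh.
apply: (iX _ c (filter_uniq _ us) sX'); last by rewrite mem_filter yh.
by rewrite big_filter.
Qed.

End Spans.

(* A nonzero subgroup D of the integers is generated by its least positive
   element d. *)
Lemma int_subgroup_generator (D : int -> Prop) : is_subgroup D ->
  (exists2 k, D k & k != 0) ->
  exists d : nat, [/\ (0 < d)%N, D d%:Z & forall c, D c -> (d %| c)%Z].
Proof.
move=> sD [k Dk k0].
have Dabs : D `|k|%N%:Z.
  case: (ltrgtP k 0) => [kn|kp|k00]; last by rewrite k00 eqxx in k0.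
    by rewrite ltz0_abs //; apply: subgroupN.
  by rewrite gtz0_abs.
have exP : exists n, decb (D n%:Z /\ (0 < n)%N).
  by exists `|k|%N; apply/decbP; rewrite absz_gt0.
case: (ex_minnP exP) => d /decbP [Dd d0] dmin.
exists d; split=> // c Dc; apply/dvdz_mod0P.
have d0' : d%:Z != 0 by rewrite eqz_nat -lt0n.
have Dr : D (c %% d)%Z.
  have -> : (c %% d)%Z = c - d%:Z *~ (c %/ d)%Z.
    by rewrite mulrzz mulrC {2}(divz_eq c d) addrC addKr.
  by apply: subgroupB => //; apply: subgroupMz.
apply/eqP; apply: contraTT (ltz_pmod c (d0 : 0 < d%:Z)) => r0; rewrite -leNgt.
rewrite -(gez0_abs (modz_ge0 c d0')) lez_nat; apply: dmin; apply/decbP.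
by rewrite gez0_abs ?modz_ge0 // absz_gt0.
Qed.

Section FiniteLists.
Variable V : zmodType.
Implicit Types (e t : seq V) (g : V).

(* Span and independence of a finite list, with coefficients indexed by
   positions; this is the form used for the induction on the list. *)
Definition spanl e g := exists c : nat -> int, g = \sum_(i < size e) e`_i *~ c i.

Definition indepl e := forall c : nat -> int,
  \sum_(i < size e) e`_i *~ c i = 0 -> forall i, (i < size e)%N -> c i = 0.

Lemma spanl_subgroup e : is_subgroup (spanl e).
Proof.
split; first by exists (fun _ => 0); rewrite big1 // => i _; rewrite mulr0z.
move=> _ _ [c ->] [d ->]; exists (fun i => c i - d i); rewrite -sumrB.
by apply: eq_bigr => i _; rewrite mulrzBr.
Qed.

Lemma spanl_cons x e g :
  spanl (x :: e) g -> exists k g', spanl e g' /\ g = x *~ k + g'.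
Proof.
move=> [c ->]; exists (c 0%N), (\sum_(i < size e) e`_i *~ c i.+1).
by split; [exists (fun i => c i.+1) | rewrite /= big_ord_recl].
Qed.

Lemma indepl_behead x e : indepl (x :: e) -> indepl e.
Proof.
move=> ie c sc i ie'; apply: (ie (fun i => if i is j.+1 then c j else 0) _ i.+1) => //.
by rewrite /= big_ord_recl /= mulr0z add0r.
Qed.

Lemma indepl_head x e m : indepl (x :: e) -> spanl e (x *~ m) -> m = 0.
Proof.
move=> ie [c cE].
apply: (ie (fun i => if i is j.+1 then - c j else m) _ 0%N) => //.
rewrite /= big_ord_recl /=.
have -> : \sum_(i < size e) e`_i *~ - c i = - (x *~ m).
  by rewrite cE -sumrN; apply: eq_bigr => i _; rewrite mulrNz.
by rewrite subrr.
Qed.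

Lemma spanl_of_span t g : uniq t -> Defs.span (fun x => x \in t) g -> spanl t g.
Proof.
move=> ut /span_uniq [s [c [us st ->]]].
exists (fun i => if t`_i \in s then c t`_i else 0).
rewrite -(sum_restrict (fun y => y *~ c y) us ut st) (big_nth 0) big_mkord.
by apply: eq_bigr => i _; case: (_ \in s); rewrite ?mulr0z.
Qed.

End FiniteLists.

Lemma spanl_map (U V : zmodType) (f : {additive U -> V}) (t : seq U) g :
  spanl t g -> spanl (map f t) (f g).
Proof.
move=> [c ->]; exists c; rewrite raddf_sum size_map; apply: eq_bigr => i _.
by rewrite raddfMz (nth_map 0).
Qed.

Section FreeSubgroups.
Variable V : zmodType.
Implicit Types (H : V -> Prop) (e : seq V).

Lemma free_of_spanl_nil H : is_subgroup H -> sub_set H (spanl [::]) -> is_free H.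
Proof.
move=> sH Hs; exists (fun _ => False); split=> //.
split; first by move=> s c _ sX _ y /sX.
move=> g; split.
  by move=> /Hs [c ->]; rewrite big_ord0; apply: subgroup0 (span_is_subgroup _).
move=> [[|a s] [c [sX ->]]]; first by rewrite big_nil; apply: subgroup0.
by case: (sX a (mem_head a s)).
Qed.

Section ConsStep.
Variables (x : V) (e : seq V) (H : V -> Prop).
Hypotheses (ie : indepl (x :: e)) (sH : is_subgroup H).
Hypothesis Hs : sub_set H (spanl (x :: e)).

Definition xcoef (k : int) : Prop := exists h, H h /\ spanl e (h - x *~ k).

Lemma xcoef_subgroup : is_subgroup xcoef.
Proof.
split.
  by exists 0; rewrite mulr0z subrr; split; apply: subgroup0; [exact: sH | exact: spanl_subgroup].
move=> a b [h1 [H1 s1]] [h2 [H2 s2]]; exists (h1 - h2); split; first exact: subgroupB.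
have -> : h1 - h2 - x *~ (a - b) = (h1 - x *~ a) - (h2 - x *~ b).
  by rewrite mulrzBr !opprB addrACA [RHS]addrACA [- h2 + _]addrC.
exact: subgroupB (spanl_subgroup e) s1 s2.
Qed.

Lemma xcoef_trivial : (forall k, xcoef k -> k = 0) -> sub_set H (spanl e).
Proof.
move=> xc0 h Hh; have [k [g' [sg' hE]]] := spanl_cons (Hs Hh).
suff k0 : k = 0 by rewrite hE k0 mulr0z add0r.
by apply: xc0; exists h; split=> //; rewrite hE [x *~ k + _]addrC addrK.
Qed.

Lemma cons_basis d h0 X' : (0 < d)%N -> H h0 -> spanl e (h0 - x *~ d) ->
  (forall c, xcoef c -> (d %| c)%Z) -> is_basis (cap H (spanl e)) X' ->
  is_basis H (fun g => X' g \/ g = h0).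
Proof.
move=> d0 Hh0 sh0 ddiv [X'H [iX' eX']].
have she : is_subgroup (spanl e) := spanl_subgroup e.
split; [by move=> g [/X'H [] | ->] | split].
  apply: independent_add => // k /eX' [_ sk].
  have /(indepl_head ie)/eqP : spanl e (x *~ (d%:Z * k)).
    have -> : x *~ (d%:Z * k) = h0 *~ k - (h0 - x *~ d) *~ k.
      by rewrite mulrzBl opprB addrC subrK mulrzA.
    by apply: subgroupB => //; apply: subgroupMz.
  by rewrite mulf_eq0 eqz_nat eqn0Ngt d0 => /eqP.
move=> g; split; last by apply: span_least => // y [/X'H [] | ->].
move=> Hg; have [c [g' [sg' gE]]] := spanl_cons (Hs Hg).
have /dvdzP [q cE] : (d %| c)%Z.
  by apply: ddiv; exists g; split=> //; rewrite gE [x *~ c + _]addrC addrK.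
have rest : cap H (spanl e) (g - h0 *~ q).
  split; first by apply: subgroupB => //; apply: subgroupMz.
  have -> : g - h0 *~ q = g' - (h0 - x *~ d) *~ q.
    by rewrite gE cE mulrzBl opprB -mulrzA [_ * q]mulrC addrA [x *~ _ + g']addrC.
  by apply: subgroupB => //; apply: subgroupMz.
rewrite -(subrK (h0 *~ q) g); apply: subgroupD (span_is_subgroup _) _ _.
  by apply: span_mono (proj1 (eX' _) rest) => y; left.
by apply: subgroupMz (span_is_subgroup _) _; apply: span_in; right.
Qed.

End ConsStep.

Lemma free_of_spanl e : indepl e ->
  forall H, is_subgroup H -> sub_set H (spanl e) -> is_free H.
Proof.
elim: e => [|x e IH] ie H sH Hs; first exact: free_of_spanl_nil.
have ie' := indepl_behead ie.
case: (classic (exists2 k, xcoef x e H k & k != 0)) => [nz | z]; last first.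
  apply: (IH ie' H sH); apply: (xcoef_trivial Hs) => k xk.
  by case: (eqVneq k 0) => // nk; case: z; exists k.
have [d [d0 [h0 [Hh0 sh0]] ddiv]] := int_subgroup_generator (xcoef_subgroup x e sH) nz.
have [X' bX'] := IH ie' _ (cap_subgroup sH (spanl_subgroup e)) (fun g => @proj2 _ _).
by exists (fun g => X' g \/ g = h0); apply: (cons_basis ie sH Hs d0 Hh0 sh0 ddiv bX').
Qed.

End FreeSubgroups.

Lemma maximal_independent_multiple (V : zmodType) (H : V -> Prop) (s : seq V) :
  {in s, forall x, H x} -> independent (fun x => x \in s) ->
  (forall Y, sub_set Y H -> independent Y -> (forall x, x \in s -> Y x) ->
     forall y, Y y -> y \in s) ->
  forall h, H h -> exists2 k, k != 0 & Defs.span (fun x => x \in s) (h *~ k).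
Proof.
move=> sHs iS smax h Hh.
case: (classic (exists2 k, k != 0 & Defs.span (fun x => x \in s) (h *~ k))) => // nk.
have hS0 k : Defs.span (fun x => x \in s) (h *~ k) -> k = 0.
  by move=> sk; case: (eqVneq k 0) => // k0; case: nk; exists k.
have hs : h \in s.
  apply: (smax (fun y => y \in s \/ y = h)); [| exact: independent_add | by left | by right].
  by move=> y [/sHs | ->].
by have := hS0 1; rewrite mulr1z => /(_ (span_in (X := fun x => x \in s) hs)) /eqP.
Qed.

Section QuotientByB.
Variables (G Q : zmodType) (Gs Xs : nat -> G -> Prop) (A : G -> Prop).
Variable pi : {additive G -> Q}.
Hypothesis htf : torsion_free G.
Hypothesis hsub : forall n, is_subgroup (Gs n).
Hypothesis hmono : forall n, sub_set (Gs n) (Gs n.+1).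
Hypothesis hunion : forall x, exists n, Gs n x.
Hypothesis hbasis : forall n, is_basis (Gs n) (Xs n).
Hypothesis hA : in_B Gs Xs A.
Hypothesis pi_surj : forall q, exists x, pi x = q.
Hypothesis pi_ker : forall x, pi x = 0 <-> A x.

Lemma Gs_mono m n : (m <= n)%N -> sub_set (Gs m) (Gs n).
Proof.
move=> /subnK <-; elim: (n - m)%N => [|k IH] x Gx //.
by rewrite addSn; apply/hmono/IH.
Qed.

Lemma lift_finite (s : seq Q) : exists n t, [/\ uniq t, {in t, forall y, Xs n y} &
  forall q, Defs.span (fun x => x \in s) q ->
    exists2 g, Defs.span (fun y => y \in t) g & pi g = q].
Proof.
have [n [l [lG ls]]] : exists n (l : seq G), (forall g, g \in l -> Gs n g) /\
    forall q, q \in s -> exists2 g, g \in l & pi g = q.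
  elim: s => [|a s [n [l [lG ls]]]]; first by exists 0%N, [::].
  have [g ga] := pi_surj a; have [m Gg] := hunion g.
  exists (maxn n m), (g :: l); split.
    move=> y; rewrite inE => /orP [/eqP -> | yl].
      exact: Gs_mono (leq_maxr n m) _ Gg.
    exact: Gs_mono (leq_maxl n m) _ (lG y yl).
  move=> q; rewrite inE => /orP [/eqP -> | qs]; first by exists g; rewrite ?mem_head.
  by have [y yl yq] := ls q qs; exists y; rewrite ?inE ?yl ?orbT.
have lX g : g \in l -> Defs.span (Xs n) g by move=> /lG /(proj2 (proj2 (hbasis n))).
have [t [ut tX lt]] := span_finite_support lX.
exists n, t; split=> // q.
apply: (span_least (H := fun q => exists2 g, Defs.span (fun y => y \in t) g & pi g = q)).
  split; first by exists 0; [apply: subgroup0 (span_is_subgroup _) | exact: raddf0].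
  move=> _ _ [g1 s1 <-] [g2 s2 <-]; exists (g1 - g2); last exact: raddfB.
  exact: subgroupB (span_is_subgroup _) s1 s2.
by move=> r /ls [g /lt gt <-]; exists g.
Qed.

(* The purity of (A /\ G_m) + G_n in G, with torsion-freeness: if g*k is
   congruent modulo A to some g' in G_n, then g is congruent modulo A to some
   b in G_n, and then b*k is congruent to g'. *)
Lemma pure_sum_lift n k g g' : k != 0 -> Gs n g' -> A (g *~ k - g') ->
  exists b, [/\ Gs n b, A (g - b) & A (b *~ k - g')].
Proof.
move=> k0 Gg' Aa; have [m Ga] := hunion (g *~ k - g').
have sum_gk : sum_sub (cap A (Gs m)) (Gs n) (g *~ k).
  by exists (g *~ k - g'), g'; split=> //; rewrite subrK.
have [y [[a' [b [[Aa' _] [Gb yE]]] yk]]] :=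
  (hA.2 m).2 n k (g *~ k) sum_gk (ex_intro _ g erefl).
have yg : y = g.
  apply/eqP; rewrite -subr_eq0; apply/eqP/(torsion_free_mulz htf k0).
  by rewrite mulrzBl yk subrr.
have gE : g - b = a' by rewrite -yg yE addrK.
exists b; split=> //; first by rewrite gE.
have -> : b *~ k - g' = (g *~ k - g') - a' *~ k.
  by rewrite -gE mulrzBl opprB addrAC addrCA subrr addr0.
by apply: subgroupB (hA.1) Aa _; apply: subgroupMz (hA.1) Aa'.
Qed.

Lemma image_indepl n Y t : sub_set Y (Xs n) ->
  set_eq (cap A (Gs n)) (Defs.span Y) -> uniq t -> {in t, forall y, Xs n y} ->
  indepl (map pi [seq y <- t | ~~ decb (Y y)]).
Proof.
move=> YX eY ut tX c; set t' := [seq y <- t | _]; rewrite size_map => sc i it.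
have ut' : uniq t' := filter_uniq _ ut.
have t'X : {in t', forall y, Xs n y} by move=> y; rewrite mem_filter => /andP [_ /tX].
pose v := \sum_(y <- t') y *~ c (index y t').
have vE : v = \sum_(j < size t') t'`_j *~ c j.
  by rewrite /v (big_nth 0) big_mkord; apply: eq_bigr => j _; rewrite index_uniq.
have Av : A v.
  apply/pi_ker; rewrite vE raddf_sum -[RHS]sc; apply: eq_bigr => j _.
  by rewrite raddfMz (nth_map 0).
have Gv : Gs n v by apply/(proj2 (proj2 (hbasis n))); exists t', (fun y => c (index y t')).
have [u [b [uu uY vu]]] := span_uniq ((eY v).1 (conj Av Gv)).
have ti := mem_nth 0 it; rewrite -[i](index_uniq 0 it ut').
apply: (indep_coef (proj1 (proj2 (hbasis n))) YX ut' t'X uu uY vu ti).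
by move: ti; rewrite mem_filter => /andP [/decbP].
Qed.

Lemma multiple_in_image n Y t h k g' : sub_set Y (Xs n) ->
  set_eq (cap A (Gs n)) (Defs.span Y) -> uniq t -> {in t, forall y, Xs n y} ->
  k != 0 -> Defs.span (fun y => y \in t) g' -> pi g' = h *~ k ->
  spanl (map pi [seq y <- t | ~~ decb (Y y)]) h.
Proof.
move=> YX eY ut tX k0 g't pg'; set t' := [seq y <- t | _].
have [_ [iX eX]] := hbasis n.
have Gg' : Gs n g' by apply/eX; apply: span_mono g't => y /tX.
have [g gh] := pi_surj h.
have Aa : A (g *~ k - g') by apply/pi_ker; rewrite raddfB raddfMz gh pg' subrr.
have [b [Gb Agb Abk]] := pure_sum_lift k0 Gg' Aa.
pose Z y := y \in t \/ Y y.
have bkZ : Defs.span Z (b *~ k).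
  rewrite -(subrK g' (b *~ k)); apply: subgroupD (span_is_subgroup _) _ _.
    apply: span_mono (proj1 (eY _) (conj Abk _)) => [y|]; first by right.
    by apply: subgroupB (hsub n) _ Gg'; apply: subgroupMz.
  by apply: span_mono g't => y; left.
have bZ : Defs.span Z b.
  by apply: span_part_pure iX _ (proj1 (eX b) Gb) k0 bkZ => y [/tX | /YX].
have bZ' : Defs.span (fun y => y \in t' \/ Y y) b.
  apply: span_mono bZ => y [yt|Yy]; last by right.
  by case: (decbP (Y y)) => Yy; [right | left; rewrite mem_filter yt andbT; apply/decbP].
have [b1 [b2 [b1t b2Y bE]]] := span_union bZ'.
have pb2 : pi b2 = 0 by apply/pi_ker; case: ((eY b2).2 b2Y).
have pgb : pi (g - (b1 + b2)) = 0 by rewrite -bE; apply/pi_ker.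
have -> : h = pi b1.
  by rewrite -gh -(subrK (b1 + b2) g) raddfD pgb raddfD pb2 add0r addr0.
exact: spanl_map (spanl_of_span (filter_uniq _ ut) b1t).
Qed.

End QuotientByB.

Theorem lemma4 (G : zmodType) (Gs Xs : nat -> G -> Prop)
  (htf : torsion_free G)
  (hG0 : forall x, Gs 0%N x <-> x = 0)
  (hsub : forall n, is_subgroup (Gs n))
  (hchain : forall n, sub_set (Gs n) (Gs n.+1) /\ exists x, Gs n.+1 x /\ ~ Gs n x)
  (hfree : forall n, is_free (Gs n))
  (hpure : forall n, is_pure (Gs n))
  (hunion : forall x : G, exists n, Gs n x)
  (hbasis : forall n, is_basis (Gs n) (Xs n))
  (A : G -> Prop) (hA : in_B Gs Xs A)
  (Q : zmodType) (pi : G -> Q)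
  (pi_add : forall x y, pi (x + y) = pi x + pi y)
  (pi_surj : forall q : Q, exists x, pi x = q)
  (pi_ker : forall x, pi x = 0 <-> A x) :
  forall H : Q -> Prop,
    is_subgroup H -> is_pure H -> finite_rank H -> is_free H.
Proof.
move=> H sH _ [s [sHs [iS smax]]].
have pi0 : pi 0 = 0 by apply: (@addrI _ (pi 0)); rewrite -pi_add !addr0.
pose phi : {additive G -> Q} :=
  HB.pack pi (GRing.isNmodMorphism.Build G Q pi (pi0, pi_add)).
have hmono n := (hchain n).1.
have [n [t [ut tX lift_s]]] := lift_finite (pi := phi) hmono hunion hbasis pi_surj s.
have [Y [YX eY]] := (hA.2 n).1.
apply: (free_of_spanl (image_indepl (pi := phi) hbasis pi_ker YX eY ut tX) sH) => h Hh.
have [k k0 /lift_s [g' g't pg']] := maximal_independent_multiple sHs iS smax Hh.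
exact: (multiple_in_image (pi := phi) htf hsub hunion hbasis hA pi_surj pi_ker
          YX eY ut tX k0 g't pg').
Qed.
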